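(* On the étale cover $\tilde U$ (see context), with the lifted Poisson bracket, one has $\{x_i,x_j\}=0$, $\{y_i,y_j\}=0$ and $\{x_i,y_j\}=\delta_{ij}y_j$ for all $1\le i,j\le d$.
   Context: Let $V=\mathbb C^d$ and let $\mathfrak a=(\mathfrak{gl}(V)\ltimes V)\oplus(\mathfrak{gl}(V)\ltimes V^* )$ with basis $e_{ij}$, $e'_{ij}$ (matrix units of the two copies of $\mathfrak{gl}(V)$), $q_i$ (basis of $V$), $p_i$ (basis of $V^*$), with the standard $\mathfrak{gl}$ brackets, $[e_{ij},q_k]=\delta_{jk}q_i$, $[e'_{ij},p_k]=-\delta_{ki}p_j$, and all other brackets of basis elements zero. Let $\mathbb C[\mathfrak Z_d]:=\big(S(\mathfrak a)/S(\mathfrak a)\mathfrak{gl}(V)_{\rm diag}\big)^{\mathfrak{gl}(V)_{\rm diag}}\cong\mathbb C[e_{ij},q_i,p_i]^{\mathfrak{gl}(V)}$, with the Poisson bracket induced from the Lie–Poisson bracket on $S(\mathfrak a)$, where $\mathfrak{gl}(V)_{\rm diag}$ is spanned by $e_{ij}+e'_{ij}$; $\mathfrak Z_d=\operatorname{Spec}\mathbb C[\mathfrak Z_d]$. Let $a_r=\operatorname{Tr}A^r$ where $A=(e_{ij})$, and $b_s=\sum p_{i_1}e_{i_1i_2}\cdots e_{i_si_{s+1}}q_{i_{s+1}}$. Let $U\subset\mathfrak Z_d$ be the open subset where $A$ has $d$ distinct eigenvalues, and $\tilde U\to U$ the étale cover given by orderings of the eigenvalues; the Poisson bracket lifts uniquely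 to $\tilde U$. On $\tilde U$ let $x_1,\dots,x_d$ be the ordered eigenvalues (so $a_r=\sum_i x_i^r$) and $y_i=\sum_{r=0}^{d-1}(-1)^r\sigma_r(x_1,\dots,\widehat{x_i},\dots,x_d)\,b_{d-1-r}$, where $\sigma_r$ is the $r$-th elementary symmetric function. *)

From HB Require Import structures.
From mathcomp Require Import all_boot all_order all_algebra.
From mathcomp Require Import reals complex.
Set Implicit Arguments. Unset Strict Implicit. Unset Printing Implicit Defensive.
Import Order.TTheory GRing.Theory Num.Theory.
Local Open Scope ring_scope.

(* The field of complex numbers: C = R[i] for R a model of the reals
   (any realType is isomorphic to the real numbers). *)
Definition Cplx (R : realType) := complex R.

Definition poisson_bracket (K : fieldType) (S : comUnitAlgType K)
  (br : S -> S -> S) : Prop :=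
  [/\ forall (a : K) (f g h : S), br (a *: f + g) h = a *: br f h + br g h,
      forall (a : K) (f g h : S), br h (a *: f + g) = a *: br h f + br h g,
      forall f g : S, br f g = - br g f,
      forall f g h : S, br (f * g) h = f * br g h + g * br f h
    & forall f g h : S, br f (br g h) + br g (br h f) + br h (br f g) = 0].

Definition Amat (S : comUnitRingType) (d : nat) (E : 'I_d -> 'I_d -> S)
  : 'M[S]_d := \matrix_(i, j) E i j.

(* b_s = sum p_{i1} e_{i1 i2} ... e_{is i(s+1)} q_{i(s+1)} = p^T A^s q. *)
Definition bfun (S : comUnitRingType) (d : nat) (E : 'I_d -> 'I_d -> S)
  (Q P : 'I_d -> S) (s : nat) : S :=
  \sum_(i < d) \sum_(j < d) P i * (Amat E ^+ s) i j * Q j.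

Definition esym_omit (S : comUnitRingType) (d : nat) (x : 'I_d -> S)
  (i : 'I_d) (r : nat) : S :=
  \sum_(J : {set 'I_d} | (#|J| == r) && (i \notin J)) \prod_(j in J) x j.

Definition yfun (S : comUnitRingType) (d : nat) (E : 'I_d -> 'I_d -> S)
  (Q P : 'I_d -> S) (x : 'I_d -> S) (i : 'I_d) : S :=
  \sum_(r < d) (-1) ^+ r * esym_omit x i r * bfun E Q P (d.-1 - r).

From HB Require Import structures.
From mathcomp Require Import all_boot all_order all_algebra.
From mathcomp Require Import reals complex.
From mathcomp Require Import ring.
Set Implicit Arguments. Unset Strict Implicit. Unset Printing Implicit Defensive.
Import Order.TTheory GRing.Theory Num.Theory.
Local Open Scope ring_scope.

(* Let P_i = L_i(A) / L_i(x_i), with L_i = prod_(k != i) (X - x_k), be the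
   spectral projectors of A = (e_ij) and z_i = p^T P_i q; by Vieta's formula
   y_i = L_i(x_i) z_i.  Bracketing with a fixed function is a derivation D, and
   first-order perturbation theory gives D x_i = tr (P_i DA) (using tr P_i = 1,
   which follows from Jacobi's formula for the derivative of char_poly A) and
   D P_i = sum_(m != i) (P_m DA P_i + P_i DA P_m) / (x_i - x_m).  On the
   generators this shows that x_i Poisson-commutes with e and p, hence with
   x_j, that {x_i, z_j} = delta_ij z_j, and that
   {z_i, z_j} = 2 z_i z_j / (x_i - x_j) for i <> j; the latter is exactly
   cancelled by the brackets of the z's with the prefactors L_i(x_i). *)

Definition derivation (R : nzRingType) (D : R -> R) : Prop :=
  {morph D : a b / a + b} /\ forall a b, D (a * b) = D a * b + a * D b.

Section Derivation.
Variables (R : comNzRingType) (D : R -> R).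
Hypothesis Dder : derivation D.

Lemma derD : {morph D : a b / a + b}. Proof. by case: Dder. Qed.

Lemma derM a b : D (a * b) = D a * b + a * D b. Proof. by case: Dder. Qed.

Lemma der0 : D 0 = 0.
Proof. by apply: (@addrI _ (D 0)); rewrite -derD !addr0. Qed.

Lemma derN : {morph D : a / - a}.
Proof. by move=> a; apply: (@addrI _ (D a)); rewrite -derD !subrr der0. Qed.

Lemma derB : {morph D : a b / a - b}.
Proof. by move=> a b; rewrite derD derN. Qed.

Lemma der1 : D 1 = 0.
Proof.
have D11 := derM 1 1; rewrite !mul1r !mulr1 in D11.
by apply: (@addrI _ (D 1)); rewrite addr0 -D11.
Qed.

Lemma der_sum (I : Type) (s : seq I) (P : pred I) (F : I -> R) :
  D (\sum_(i <- s | P i) F i) = \sum_(i <- s | P i) D (F i).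
Proof. exact: (big_morph D derD der0). Qed.

Lemma der_prod_eq0 (I : Type) (s : seq I) (P : pred I) (F : I -> R) :
  (forall i, P i -> D (F i) = 0) -> D (\prod_(i <- s | P i) F i) = 0.
Proof.
move=> DF0; apply: (big_ind (fun a => D a = 0)) => //; first exact: der1.
by move=> a b Da0 Db0; rewrite derM Da0 Db0 mul0r mulr0 addr0.
Qed.

Lemma der_sign k : D ((-1) ^+ k) = 0.
Proof.
elim: k => [|k IHk]; first by rewrite expr0 der1.
by rewrite exprS derM IHk mulr0 derN der1 oppr0 mul0r addr0.
Qed.

Lemma der_prod (I : eqType) (s : seq I) (F : I -> R) : uniq s ->
  D (\prod_(i <- s) F i) =
  \sum_(j <- s) \prod_(i <- s) (if i == j then D (F i) else F i).
Proof.
elim: s => [|a s IHs] /=; first by rewrite !big_nil der1.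
case/andP=> a_notin_s uniq_s; rewrite big_cons derM IHs // big_cons big_cons eqxx.
congr (_ + _).
  congr (_ * _); apply: eq_big_seq => i i_s; case: eqP => // eq_ia.
  by rewrite -eq_ia i_s in a_notin_s.
rewrite big_distrr /=; apply: eq_big_seq => j j_s; rewrite big_cons.
by case: eqP => // eq_aj; rewrite eq_aj j_s in a_notin_s.
Qed.

Lemma der_det n (M : 'M[R]_n) :
  D (\det M) = \sum_j \det (\matrix_(i, k) (if i == j then D (M i k) else M i k)).
Proof.
rewrite /determinant der_sum.
under eq_bigr => s _ do
  rewrite derM der_sign mul0r add0r der_prod ?index_enum_uniq // big_distrr.
rewrite exchange_big /=; apply: eq_bigr => j _; apply: eq_bigr => s _.
by congr (_ * _); apply: eq_bigr => i _; rewrite mxE.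
Qed.

Lemma der_mulmx m n p (M : 'M[R]_(m, n)) (N : 'M[R]_(n, p)) :
  map_mx D (M *m N) = map_mx D M *m N + M *m map_mx D N.
Proof.
apply/matrixP => i j; rewrite !mxE der_sum -big_split /=.
by apply: eq_bigr => k _; rewrite derM !mxE.
Qed.

Lemma der_scalemx m n c (M : 'M[R]_(m, n)) :
  map_mx D (c *: M) = D c *: M + c *: map_mx D M.
Proof. by apply/matrixP => i j; rewrite !mxE derM. Qed.

End Derivation.

Lemma derivation_deriv (R : comNzRingType) : derivation (@deriv R).
Proof. by split=> [p q|p q]; rewrite ?derivD ?derivM. Qed.

Lemma deriv_char_poly (R : comNzRingType) n (A : 'M[R]_n) :
  (char_poly A)^`() = \tr (\adj (char_poly_mx A)).
Proof.
rewrite /char_poly (der_det (derivation_deriv R)); apply: eq_bigr => j _.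
have deriv_entry i k : (char_poly_mx A i k)^`() = (i == k)%:R.
  by rewrite !mxE derivB derivMn derivX derivC subr0.
rewrite (expand_det_row _ j) (bigD1 j) //= big1 ?addr0; last first.
  by move=> k kj; rewrite mxE eqxx deriv_entry eq_sym (negbTE kj) mul0r.
rewrite mxE eqxx deriv_entry eqxx mul1r [RHS]mxE /cofactor; congr (_ * \det _).
by apply/matrixP => a b; rewrite !mxE eq_sym (negbTE (neq_lift _ _)).
Qed.

Section SpectralProjectors.
Variables (S : comUnitRingType) (n : nat) (A : 'M[S]_n.+1) (x : 'I_n.+1 -> S).
Hypothesis A_char : char_poly A = \prod_i ('X - (x i)%:P).
Hypothesis x_sep : forall i j, i != j -> x i - x j \is a GRing.unit.

Definition lagrange_num i : {poly S} := \prod_(k | k != i) ('X - (x k)%:P).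
Definition lagrange_den i : S := \prod_(k | k != i) (x i - x k).
Fact eigenproj_key : unit. Proof. exact: tt. Qed.
Definition eigenproj i : 'M[S]_n.+1 :=
  locked_with eigenproj_key ((lagrange_den i)^-1 *: horner_mx A (lagrange_num i)).

Lemma eigenprojE i :
  eigenproj i = (lagrange_den i)^-1 *: horner_mx A (lagrange_num i).
Proof. by rewrite /eigenproj unlock. Qed.

Lemma lagrange_den_unit i : lagrange_den i \is a GRing.unit.
Proof. by apply: unitr_prod => k ki; apply: x_sep; rewrite eq_sym. Qed.

Lemma horner_lagrange_num i k :
  (lagrange_num i).[x k] = if k == i then lagrange_den i else 0.
Proof.
rewrite horner_prod; case: eqP => [->|/eqP ki].
  by apply: eq_bigr => l _; rewrite hornerXsubC.
by rewrite (bigD1 k) //= hornerXsubC subrr mul0r.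
Qed.

Lemma char_poly_lagrange i : char_poly A = ('X - (x i)%:P) * lagrange_num i.
Proof. by rewrite A_char (bigD1 i). Qed.

Lemma size_lagrange_num i : size (lagrange_num i) = n.+1.
Proof.
have /eqP := size_char_poly A; rewrite (char_poly_lagrange i) mulrC.
rewrite size_Mmonic ?monicXsubC ?size_XsubC ?monic_neq0 ?monic_prod_XsubC //.
by rewrite addn2 eqSS => /eqP.
Qed.

Lemma mul_eigenproj i : A *m eigenproj i = x i *: eigenproj i.
Proof.
have := Cayley_Hamilton A.
rewrite (char_poly_lagrange i) rmorphM /= rmorphB /= horner_mx_X horner_mx_C.
rewrite -mulmxE mulmxBl mul_scalar_mx => /eqP; rewrite subr_eq0 => /eqP AL.
by rewrite eigenprojE -scalemxAr AL scalerA mulrC -scalerA.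
Qed.

Lemma eigenproj_mul i : eigenproj i *m A = x i *: eigenproj i.
Proof.
rewrite -mul_eigenproj eigenprojE -scalemxAl -scalemxAr; congr (_ *: _).
by apply: comm_horner_mx.
Qed.

Lemma horner_mx_eigenproj f i :
  horner_mx A f *m eigenproj i = f.[x i] *: eigenproj i.
Proof.
elim/poly_ind: f => [|f c IHf]; first by rewrite rmorph0 mul0mx horner0 scale0r.
rewrite rmorphD rmorphM /= horner_mx_X horner_mx_C mulmxDl -mulmxE -mulmxA.
rewrite mul_eigenproj -scalemxAr IHf scalerA mul_scalar_mx hornerD hornerMX.
by rewrite hornerC scalerDl mulrC.
Qed.

Lemma eigenprojM k i :
  eigenproj k *m eigenproj i = if k == i then eigenproj i else 0.
Proof.
rewrite [eigenproj k]eigenprojE -scalemxAl horner_mx_eigenproj.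
rewrite horner_lagrange_num scalerA eq_sym.
case: eqP => [->|_]; last by rewrite mulr0 scale0r.
by rewrite mulVr ?lagrange_den_unit ?scale1r.
Qed.

Lemma eigenproj_idem i : eigenproj i *m eigenproj i = eigenproj i.
Proof. by rewrite eigenprojM eqxx. Qed.

(* The difference has degree at most n and vanishes at the n.+1 separated
   nodes x k. *)
Lemma sum_lagrange : \sum_i (lagrange_den i)^-1 *: lagrange_num i = 1.
Proof.
apply/eqP; rewrite -subr_eq0; apply/eqP; set h := _ - 1.
have h_roots : all (root h) [seq x k | k <- enum 'I_n.+1].
  apply/allP => _ /mapP[k _ ->]; rewrite /root /h hornerD hornerN hornerC.
  rewrite horner_sum (bigD1 k) //= big1 ?addr0.
    by rewrite hornerZ horner_lagrange_num eqxx mulVr ?lagrange_den_unit ?subrr.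
  by move=> i ik; rewrite hornerZ horner_lagrange_num eq_sym (negbTE ik) mulr0.
have x_uniq : uniq_roots [seq x k | k <- enum 'I_n.+1].
  elim: (enum _) (enum_uniq 'I_n.+1) => [|a s IHs] //= /andP[a_notin_s /IHs->].
  rewrite andbT; apply/allP => _ /mapP[b b_s ->].
  by rewrite /diff_roots mulrC eqxx x_sep //; apply: contraNneq a_notin_s => <-.
apply: contraTeq x_uniq => h_neq0.
apply/negP => /(max_ring_poly_roots h_neq0 h_roots).
rewrite size_map size_enum_ord ltnNge => /negP; apply.
apply: leq_trans (size_polyD _ _) _; rewrite size_polyN size_poly1 geq_max andbT.
apply: (big_ind (fun p : {poly S} => size p <= n.+1)%N) => [|p q|i _].
- by rewrite size_poly0.
- by move=> p_le q_le; apply: leq_trans (size_polyD _ _) _; rewrite geq_max p_le.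
by apply: leq_trans (size_scale_leq _ _) _; rewrite size_lagrange_num.
Qed.

Lemma sum_eigenproj : \sum_i eigenproj i = 1%:M.
Proof.
have := congr1 (horner_mx A) sum_lagrange; rewrite rmorph_sum rmorph1 /=.
rewrite -[1%:M]/(1 : 'M_n.+1) => <-.
by apply: eq_bigr => i _; rewrite horner_mxZ eigenprojE.
Qed.

(* Multiplying by the monic, hence regular, factor X - x k turns this into
   adj(X - A) (X - A) P_k = char_poly A P_k. *)
Lemma adj_char_poly_mx_eigenproj k :
  \adj (char_poly_mx A) *m map_mx polyC (eigenproj k) =
  lagrange_num k *: map_mx polyC (eigenproj k).
Proof.
set Pk := map_mx polyC (eigenproj k).
have XA_Pk : char_poly_mx A *m Pk = ('X - (x k)%:P) *: Pk.
  rewrite /char_poly_mx mulmxBl mul_scalar_mx -map_mxM mul_eigenproj map_mxZ /=.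
  by rewrite scalerBl.
have : ('X - (x k)%:P) *: (\adj (char_poly_mx A) *m Pk - lagrange_num k *: Pk)
       = 0.
  rewrite scalerBr scalerA -char_poly_lagrange scalemxAr -XA_Pk mulmxA.
  by rewrite mul_adj_mx mul_scalar_mx subrr.
move=> /matrixP XAdiff0; apply/eqP; rewrite -subr_eq0; apply/eqP/matrixP => a b.
apply: (monic_lreg (monicXsubC (x k))).
by have := XAdiff0 a b; rewrite !mxE => ->; rewrite mulr0.
Qed.

Lemma mxtrace_adj_char_poly_mx :
  \tr (\adj (char_poly_mx A)) = \sum_k lagrange_num k * (\tr (eigenproj k))%:P.
Proof.
rewrite -[\adj _]mulmx1 -(map_mx1 polyC) -sum_eigenproj raddf_sum mulmx_sumr.
rewrite raddf_sum; apply: eq_bigr => k _ /=.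
by rewrite adj_char_poly_mx_eigenproj mxtraceZ trace_map_mx.
Qed.

(* At X = x i the derivative of char_poly A is lagrange_den i, while the
   trace of the adjugate is lagrange_den i * tr P_i. *)
Lemma mxtrace_eigenproj i : \tr (eigenproj i) = 1.
Proof.
have := congr1 (horner^~ (x i)) (etrans (deriv_char_poly A)
                                         mxtrace_adj_char_poly_mx).
rewrite /= (char_poly_lagrange i) derivM derivXsubC mul1r hornerD hornerM.
rewrite hornerXsubC subrr mul0r addr0 horner_sum (bigD1 i) //= big1 ?addr0.
  rewrite hornerM hornerC horner_lagrange_num eqxx => den_tr.
  by apply: (mulrI (lagrange_den_unit i)); rewrite mulr1 -den_tr.
by move=> k ki; rewrite hornerM horner_lagrange_num eq_sym (negbTE ki) mul0r.
Qed.

Section Perturbation.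
Variable D : S -> S.
Hypothesis Dder : derivation D.
Local Notation P := eigenproj.
Local Notation DA := (map_mx D A).

Lemma eigenproj_derA_eigenproj m i :
  P m *m DA *m P i =
  (x i - x m) *: (P m *m map_mx D (P i)) + (if m == i then D (x i) *: P i else 0).
Proof.
have := congr1 (mulmx (P m)) (congr1 (map_mx D) (mul_eigenproj i)).
rewrite der_mulmx // der_scalemx // !mulmxDr !mulmxA eigenproj_mul.
rewrite -!scalemxAr -scalemxAl eigenprojM => /(canRL (addrK _)) ->.
by rewrite scalerBl [RHS]addrC addrA; case: eqP; rewrite ?scaler0.
Qed.

Lemma der_eigenvalue i : D (x i) = \tr (P i *m DA).
Proof.
have := eigenproj_derA_eigenproj i i; rewrite subrr scale0r add0r eqxx.
move=> /(congr1 mxtrace); rewrite mxtraceZ mxtrace_eigenproj mulr1 => <-.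
by rewrite mxtrace_mulC mulmxA eigenproj_idem.
Qed.

Lemma eigenproj_der_eigenproj m i : m != i ->
  P m *m map_mx D (P i) = (x i - x m)^-1 *: (P m *m DA *m P i).
Proof.
move=> mi; rewrite eigenproj_derA_eigenproj (negbTE mi) addr0 scalerA.
by rewrite mulVr ?scale1r // x_sep // eq_sym.
Qed.

Lemma der_eigenproj_eigenproj m i : m != i ->
  map_mx D (P i) *m P m = (x i - x m)^-1 *: (P i *m DA *m P m).
Proof.
move=> mi; have := congr1 (mulmx^~ (P m)) (congr1 (map_mx D) (eigenproj_mul i)).
rewrite der_mulmx // der_scalemx // !mulmxDl -!mulmxA mul_eigenproj.
rewrite -!scalemxAl -!scalemxAr eigenprojM eq_sym (negbTE mi) scaler0 add0r.
rewrite mulmxA => /(canRL (addKr _)) ->.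
rewrite [- _ + _]addrC -scalerBl scalerA.
by rewrite mulVr ?scale1r // x_sep // eq_sym.
Qed.

Lemma eigenproj_der_eigenproj_diag i : P i *m map_mx D (P i) *m P i = 0.
Proof.
have := congr1 (fun M => P i *m M *m P i) (congr1 (map_mx D) (eigenproj_idem i)).
rewrite /= der_mulmx // mulmxDr mulmxDl !mulmxA eigenproj_idem.
by rewrite -!mulmxA eigenproj_idem !mulmxA => /(canRL (addrK _)); rewrite subrr.
Qed.

(* Split D P_i = sum_m P_m (D P_i) and P_i (D P_i) = sum_l P_i (D P_i) P_l;
   the term P_i (D P_i) P_i vanishes and the others are given by the two
   lemmas above. *)
Lemma der_eigenproj i :
  map_mx D (P i) =
  \sum_(m | m != i) (x i - x m)^-1 *: (P m *m DA *m P i + P i *m DA *m P m).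
Proof.
rewrite -[LHS]mul1mx -sum_eigenproj mulmx_suml (bigD1 i) //=.
rewrite -[P i *m _]mulmx1 -sum_eigenproj mulmx_sumr (bigD1 i) //=.
rewrite eigenproj_der_eigenproj_diag add0r addrC -big_split /=.
apply: eq_bigr => m mi; rewrite eigenproj_der_eigenproj //.
rewrite -[_ *m _ *m P m]mulmxA der_eigenproj_eigenproj // -scalemxAr scalerDr.
by rewrite !mulmxA eigenproj_idem.
Qed.

End Perturbation.

End SpectralProjectors.

Section Vieta.
Variables (S : comUnitRingType) (n : nat) (x : 'I_n.+1 -> S) (j : 'I_n.+1).

(* The product over k != j is the full product of F k + G k, whose factor at
   k = j is 0 + 1; it is expanded by distributivity over subsets J. *)
Let F k : {poly S} := if k == j then 0 else - (x k)%:P.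
Let G k : {poly S} := if k == j then 1 else 'X.

Lemma card_setC_D1 (J : {set 'I_n.+1}) :
  j \notin J -> #|~: J :\ j| = (n - #|J|)%N.
Proof.
move=> jJ; have /eqP := cardsC J; rewrite card_ord (cardsD1 j (~: J)) inE jJ /=.
rewrite addnCA add1n eqSS => /eqP cardJD.
apply: (@addnI #|J|); rewrite subnKC //.
by have := leq_addr #|~: J :\ j| #|J|; rewrite cardJD.
Qed.

Lemma vieta_term (J : {set 'I_n.+1}) : j \notin J ->
  \prod_k (if k \in J then F k else G k) =
  ((-1) ^+ #|J| * \prod_(k in J) x k) *: 'X^(n - #|J|).
Proof.
move=> jJ; rewrite (bigID (mem J)) /=.
have -> : \prod_(k in J) (if k \in J then F k else G k) =
          \prod_(k in J) - (x k)%:P.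
  apply: eq_bigr => k kJ; rewrite kJ /F; case: eqP => // kj.
  by rewrite -kj kJ in jJ.
have -> : \prod_(k | k \notin J) (if k \in J then F k else G k) = 'X^(n - #|J|).
  rewrite (bigD1 j) //= (negbTE jJ) /G eqxx mul1r -(card_setC_D1 jJ) -prodr_const.
  apply: eq_big => [k|k /andP[kJ kj]]; first by rewrite !inE andbC.
  by rewrite (negbTE kJ) (negbTE kj).
by rewrite prodrN -mul_polyC rmorphM rmorphXn rmorphN rmorph1 rmorph_prod.
Qed.

Lemma lagrange_num_esym_omit :
  lagrange_num x j = \sum_(r < n.+1) ((-1) ^+ r * esym_omit x j r) *: 'X^(n - r).
Proof.
have -> : lagrange_num x j = \prod_k (F k + G k).
  rewrite [RHS](bigD1 j) //= /F /G eqxx add0r mul1r.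
  by apply: eq_bigr => k kj; rewrite (negbTE kj) addrC.
rewrite bigA_distr /= (bigID (fun J : {set _} => j \in J)) /= big1 ?add0r;
  last first.
  by move=> J jJ; rewrite (bigD1 j) //= jJ /F eqxx mul0r.
under eq_bigr => J jJ do rewrite (vieta_term jJ).
under [RHS]eq_bigr => r _ do rewrite /esym_omit mulr_sumr scaler_suml.
rewrite [RHS](exchange_big_dep (fun J : {set 'I_n.+1} => j \notin J)) /=;
  last first.
  by move=> r J _ /andP[].
apply: eq_bigr => J jJ.
have cardJ : (#|J| < n.+1)%N.
  have /subset_leq_card : J \subset [set~ j].
    by apply/subsetP => k kJ; rewrite !inE; apply: contraNneq jJ => <-.
  by rewrite cardsC1 card_ord.
rewrite [RHS](bigD1 (Ordinal cardJ)) /=; last by rewrite eqxx jJ.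
rewrite [X in _ = _ + X]big1 ?addr0 // => r /andP[/andP[/eqP cardr _]].
by apply: contraNeq => _; apply/eqP/val_inj; rewrite /= cardr.
Qed.

End Vieta.


Lemma mulmx_delta_entry (R : comNzRingType) m p q (M : 'M[R]_(m, p)) l (k : 'I_q)
    a b :
  (M *m delta_mx l k) a b = M a l * (b == k)%:R.
Proof.
rewrite mxE (bigD1 l) //= big1 ?addr0; first by rewrite mxE eqxx.
by move=> c cl; rewrite mxE (negbTE cl) mulr0.
Qed.

Lemma delta_mx_mul_entry (R : comNzRingType) m p q (M : 'M[R]_(p, q)) (l : 'I_m) k
    a b :
  (delta_mx l k *m M) a b = (a == l)%:R * M k b.
Proof.
rewrite mxE (bigD1 k) //= big1 ?addr0; first by rewrite mxE eqxx andbT.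
by move=> c ck; rewrite mxE (negbTE ck) andbF mul0r.
Qed.

Lemma mulmx11_entry (R : comNzRingType) (X Y : 'M[R]_1) :
  (X *m Y) 0 0 = X 0 0 * Y 0 0.
Proof. by rewrite mxE big_ord1. Qed.

Section PoissonBracket.
Variables (K : numFieldType) (S : comUnitAlgType K) (br : S -> S -> S).
Hypothesis br_poisson : poisson_bracket br.

Lemma brDl h : {morph br^~ h : f g / f + g}.
Proof.
by case: br_poisson => brZDl _ _ _ _ f g; rewrite -[f]scale1r brZDl !scale1r.
Qed.

Lemma brDr h : {morph br h : f g / f + g}.
Proof.
by case: br_poisson => _ brZDr _ _ _ f g; rewrite -[f]scale1r brZDr !scale1r.
Qed.

Lemma br_anti f g : br f g = - br g f.
Proof. by case: br_poisson. Qed.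

Lemma brMl h f g : br (f * g) h = br f h * g + f * br g h.
Proof. by case: br_poisson => _ _ _ brM _; rewrite brM addrC mulrC. Qed.

Lemma brMr h f g : br h (f * g) = br h f * g + f * br h g.
Proof.
by rewrite br_anti brMl opprD [br f h]br_anti [br g h]br_anti mulNr mulrN !opprK.
Qed.

Lemma derivation_brl h : derivation (br^~ h).
Proof. by split; [exact: brDl | exact: brMl]. Qed.

Lemma derivation_brr h : derivation (br h).
Proof. by split; [exact: brDr | exact: brMr]. Qed.

(* Skewness only gives 2 {f, f} = 0: this is where K needs characteristic 0. *)
Lemma br_self f : br f f = 0.
Proof.
have : 2%:R *: br f f = 0 by rewrite scaler_nat mulr2n {1}br_anti addNr.
by move/eqP; rewrite scaler_eq0 pnatr_eq0 /= => /eqP.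
Qed.

Section Generators.
Variables (n : nat) (E : 'I_n.+1 -> 'I_n.+1 -> S) (Q P x : 'I_n.+1 -> S).
Hypothesis br_ee : forall i j k l,
  br (E i j) (E k l) = (j == k)%:R * E i l - (l == i)%:R * E k j.
Hypothesis br_eq : forall i j k, br (E i j) (Q k) = (j == k)%:R * Q i.
Hypothesis br_ep : forall i j k, br (E i j) (P k) = 0.
Hypothesis br_qq : forall k l, br (Q k) (Q l) = 0.
Hypothesis br_pp : forall k l, br (P k) (P l) = 0.
Hypothesis br_qp : forall k l, br (Q k) (P l) = 0.
Hypothesis A_char : char_poly (Amat E) = \prod_i ('X - (x i)%:P).
Hypothesis x_sep : forall i j, i != j -> x i - x j \is a GRing.unit.

Local Notation A := (Amat E).
Local Notation Pr := (eigenproj A x).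

Definition prow : 'rV[S]_n.+1 := \row_c P c.
Definition qcol : 'cV[S]_n.+1 := \col_c Q c.
Definition pq_form (M : 'M[S]_n.+1) : S := (prow *m M *m qcol) 0 0.
Definition zfun i : S := pq_form (Pr i).
Definition projq i : 'cV[S]_n.+1 := Pr i *m qcol.

Lemma pq_formD : {morph pq_form : M N / M + N}.
Proof. by move=> M N; rewrite /pq_form mulmxDr mulmxDl mxE. Qed.

Lemma pq_formB : {morph pq_form : M N / M - N}.
Proof. by move=> M N; rewrite /pq_form mulmxBr mulmxBl mxE [X in _ + X]mxE. Qed.

Lemma pq_formZ c M : pq_form (c *: M) = c * pq_form M.
Proof. by rewrite /pq_form -scalemxAr -scalemxAl mxE. Qed.

Lemma pq_form_sum (I : Type) (s : seq I) (p : pred I) (F : I -> 'M[S]_n.+1) :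
  pq_form (\sum_(m <- s | p m) F m) = \sum_(m <- s | p m) pq_form (F m).
Proof. by rewrite /pq_form mulmx_sumr mulmx_suml summxE. Qed.

Lemma pq_form_commutator N m j :
  pq_form (Pr m *m (N *m A - A *m N) *m Pr j) =
  (x j - x m) * pq_form (Pr m *m N *m Pr j).
Proof.
rewrite mulmxBr mulmxBl !mulmxA eigenproj_mul // -!mulmxA mul_eigenproj //.
by rewrite -!scalemxAr -scalemxAl pq_formB !pq_formZ mulrBl.
Qed.

Lemma der_zfun (D : S -> S) (Dder : derivation D) (DP0 : forall c, D (P c) = 0)
    i :
  D (zfun i) =
  \sum_(m | m != i) (x i - x m)^-1 *
    (pq_form (Pr m *m map_mx D A *m Pr i) + pq_form (Pr i *m map_mx D A *m Pr m))
  + (prow *m Pr i *m map_mx D qcol) 0 0.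
Proof.
have -> : D (zfun i) = map_mx D (prow *m Pr i *m qcol) 0 0 by rewrite mxE.
rewrite !der_mulmx // der_eigenproj // mxE.
have -> : map_mx D prow = 0 by apply/matrixP => a b; rewrite !mxE DP0.
rewrite mul0mx add0r; congr (_ + _).
rewrite -/(pq_form _) pq_form_sum; apply: eq_bigr => m _.
by rewrite pq_formZ pq_formD.
Qed.

Lemma der_zfun_Amat0 (D : S -> S) (Dder : derivation D)
    (DP0 : forall c, D (P c) = 0) (DA0 : map_mx D A = 0) i :
  D (zfun i) = (prow *m Pr i *m map_mx D qcol) 0 0.
Proof.
rewrite der_zfun // DA0 big1 ?add0r // => m _.
by rewrite !mulmx0 !mul0mx /pq_form !mulmx0 !mul0mx mxE addr0 mulr0.
Qed.

Lemma map_br_Amat_E k l :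
  map_mx (br^~ (E k l)) A = A *m delta_mx l k - delta_mx l k *m A.
Proof.
apply/matrixP => a b; rewrite [RHS]mxE mulmx_delta_entry [X in _ + X]mxE.
by rewrite delta_mx_mul_entry !mxE br_ee mulrC [a == l]eq_sym.
Qed.

Lemma br_x_E i k l : br (x i) (E k l) = 0.
Proof.
rewrite (der_eigenvalue A_char x_sep (derivation_brl _)) map_br_Amat_E mulmxBr.
rewrite raddfB /= mulmxA eigenproj_mul // -scalemxAl mxtraceZ.
rewrite [\tr (_ *m (_ *m A))]mxtrace_mulC -mulmxA mul_eigenproj // -scalemxAr.
by rewrite mxtraceZ mxtrace_mulC subrr.
Qed.

Lemma br_x_P i c : br (x i) (P c) = 0.
Proof.
rewrite (der_eigenvalue A_char x_sep (derivation_brl _)).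
have -> : map_mx (br^~ (P c)) A = 0 by apply/matrixP => a b; rewrite !mxE br_ep.
by rewrite mulmx0 mxtrace0.
Qed.

Lemma map_br_Amat_Q c : map_mx (br^~ (Q c)) A = qcol *m delta_mx 0 c.
Proof. by apply/matrixP => a b; rewrite mulmx_delta_entry !mxE br_eq mulrC. Qed.

Lemma br_x_Q i c : br (x i) (Q c) = projq i c 0.
Proof.
rewrite (der_eigenvalue A_char x_sep (derivation_brl _)) map_br_Amat_Q.
by rewrite mulmxA mxtrace_mulC trace_mx11 delta_mx_mul_entry eqxx mul1r.
Qed.

Lemma map_br_x_Amat i : map_mx (br (x i)) A = 0.
Proof. by apply/matrixP => a b; rewrite !mxE br_x_E. Qed.

Lemma br_x_x i j : br (x i) (x j) = 0.
Proof.
rewrite (der_eigenvalue A_char x_sep (derivation_brr _)).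
by rewrite map_br_x_Amat mulmx0 mxtrace0.
Qed.

Lemma prow_eigenproj_projq a b :
  prow *m Pr a *m projq b = ((a == b)%:R * zfun a)%:M.
Proof.
rewrite [LHS]mx11_scalar /projq mulmxA -(mulmxA prow) eigenprojM //.
by case: eqP => [->|_]; rewrite ?mul1r // mulmx0 mul0mx mxE mul0r.
Qed.

Lemma br_x_z i j : br (x i) (zfun j) = (i == j)%:R * zfun j.
Proof.
rewrite (der_zfun_Amat0 (derivation_brr _) (br_x_P i) (map_br_x_Amat i)).
have -> : map_mx (br (x i)) qcol = projq i.
  by apply/matrixP => a b; rewrite [LHS]mxE [qcol _ _]mxE br_x_Q (ord1 b).
by rewrite prow_eigenproj_projq mxE eqxx mulr1n eq_sym.
Qed.

Lemma sum_eigenproj_neq j : \sum_(m | m != j) Pr m = 1%:M - Pr j.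
Proof.
by rewrite -(sum_eigenproj A_char x_sep) [in RHS](bigD1 j) //= addrC addrK.
Qed.

Lemma prow_delta (l k : 'I_n.+1) : prow *m delta_mx l k = P l *: delta_mx 0 k.
Proof.
apply/matrixP => a b; rewrite mulmx_delta_entry !mxE (ord1 a) eqxx /=.
by case: eqP; rewrite ?mulr1 ?mulr0.
Qed.

Lemma br_E_z k l j : br (E k l) (zfun j) = P l * projq j k 0.
Proof.
set N : 'M[S]_n.+1 := delta_mx l k.
rewrite (der_zfun (derivation_brr _) (br_ep k l)).
have -> : map_mx (br (E k l)) A = N *m A - A *m N.
  by rewrite -opprB -map_br_Amat_E; apply/matrixP => a b; rewrite !mxE br_anti.
have -> : map_mx (br (E k l)) qcol = N *m qcol.
  by apply/matrixP => a b; rewrite delta_mx_mul_entry !mxE br_eq eq_sym.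
have summand m : m != j ->
    (x j - x m)^-1 * (pq_form (Pr m *m (N *m A - A *m N) *m Pr j)
                      + pq_form (Pr j *m (N *m A - A *m N) *m Pr m)) =
    pq_form (Pr m *m N *m Pr j) - pq_form (Pr j *m N *m Pr m).
  move=> mj; rewrite !pq_form_commutator -[x m - x j]opprB mulNr -mulrBr.
  by rewrite mulKr // x_sep // eq_sym.
rewrite (eq_bigr _ summand) sumrB -!pq_form_sum -mulmx_suml -mulmxA -mulmx_sumr.
rewrite -mulmx_suml !sum_eigenproj_neq mulmxBl mul1mx mulmxBr mulmx1 !pq_formB.
have -> : (prow *m (Pr j *m (N *m qcol))) 0 0 = pq_form (Pr j *m N).
  by rewrite /pq_form !mulmxA.
rewrite mulmxBl pq_formB opprB addrA !subrK /pq_form mulmxA prow_delta.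
by rewrite -!scalemxAl mxE -mulmxA delta_mx_mul_entry eqxx mul1r.
Qed.

Lemma br_P_z c j : br (P c) (zfun j) = 0.
Proof.
have DA0 : map_mx (br (P c)) A = 0.
  by apply/matrixP => a b; rewrite !mxE br_anti br_ep oppr0.
rewrite (der_zfun_Amat0 (derivation_brr _) (br_pp c) DA0).
have -> : map_mx (br (P c)) qcol = 0.
  by apply/matrixP => a b; rewrite !mxE br_anti br_qp oppr0.
by rewrite mulmx0 mxE.
Qed.

Lemma pq_form_delta_q a b c :
  pq_form (Pr a *m (qcol *m delta_mx 0 c) *m Pr b) = zfun a * projq b c 0.
Proof.
rewrite /zfun /pq_form /projq !mulmxA -(mulmxA _ (delta_mx 0 c)).
rewrite -(mulmxA _ _ qcol) mulmx11_entry -[_ *m Pr b *m qcol]mulmxA.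
by rewrite delta_mx_mul_entry eqxx mul1r.
Qed.

Lemma br_z_Q j c :
  br (zfun j) (Q c) =
  (\sum_(m | m != j)
     (x j - x m)^-1 *: (zfun m *: projq j + zfun j *: projq m)) c 0.
Proof.
have DP0 a : br (P a) (Q c) = 0 by rewrite br_anti br_qp oppr0.
rewrite (der_zfun (derivation_brl _) DP0) map_br_Amat_Q.
have -> : map_mx (br^~ (Q c)) qcol = 0.
  by apply/matrixP => a b; rewrite !mxE br_qq.
rewrite mulmx0 [(0 : 'M_1) 0 0]mxE addr0 summxE; apply: eq_bigr => m _.
by rewrite !pq_form_delta_q !mxE.
Qed.

Lemma map_br_Amat_z j : map_mx (br^~ (zfun j)) A = projq j *m prow.
Proof.
apply/matrixP => a b; rewrite [LHS]mxE [A a b]mxE br_E_z [RHS]mxE big_ord1.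
by rewrite [prow _ _]mxE mulrC.
Qed.

Lemma map_br_qcol_z j :
  map_mx (br^~ (zfun j)) qcol =
  - \sum_(m | m != j) (x j - x m)^-1 *: (zfun m *: projq j + zfun j *: projq m).
Proof.
apply/matrixP => a b; rewrite [LHS]mxE [qcol a b]mxE br_anti br_z_Q [RHS]mxE.
by rewrite (ord1 b).
Qed.

Lemma pq_form_projq_prow a b c :
  pq_form (Pr a *m (projq b *m prow) *m Pr c) = (a == b)%:R * zfun a * zfun c.
Proof.
rewrite /pq_form !mulmxA -(mulmxA _ (Pr b) qcol).
by rewrite prow_eigenproj_projq -!mulmxA mul_scalar_mx mxE mulmxA.
Qed.

Lemma br_z_z i j : i != j ->
  br (zfun i) (zfun j) = (x i - x j)^-1 * (zfun i * zfun j) *+ 2.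
Proof.
move=> ij; rewrite (der_zfun (derivation_brl _) (br_P_z^~ j)).
rewrite map_br_Amat_z map_br_qcol_z mulmxN mulmx_sumr mxE summxE.
under eq_bigr => m _ do rewrite !pq_form_projq_prow.
under [X in _ - X]eq_bigr => m _ do
  rewrite -scalemxAr mulmxDr -!scalemxAr !prow_eigenproj_projq !mxE !eqxx !mulr1n.
have ji : j != i by rewrite eq_sym.
rewrite (bigD1 j ji) /= big1 ?addr0 => [|m /andP[_ mj]]; last first.
  by rewrite (negbTE mj) (negbTE ij) !mul0r addr0 mulr0.
rewrite [X in _ - X](bigD1 i ij) /= big1 ?addr0 => [|m /andP[_ mi]]; last first.
  by rewrite (negbTE ij) eq_sym (negbTE mi) !mul0r !mulr0 addr0 mulr0.
rewrite !eqxx (negbTE ij) /= -[x j - x i]opprB invrN.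
ring.
Qed.

Lemma pq_form_bfun s : pq_form (A ^+ s) = bfun E Q P s.
Proof.
rewrite /pq_form mxE; under eq_bigr => b _ do rewrite mxE mulr_suml.
rewrite exchange_big; apply: eq_bigr => a _; apply: eq_bigr => b _.
by rewrite !mxE.
Qed.

Lemma yfun_lagrange j : yfun E Q P x j = lagrange_den x j * zfun j.
Proof.
have -> : lagrange_den x j * zfun j = pq_form (horner_mx A (lagrange_num x j)).
  rewrite /zfun -pq_formZ eigenprojE scalerA mulrV ?scale1r //.
  exact: lagrange_den_unit.
rewrite lagrange_num_esym_omit raddf_sum /= pq_form_sum; apply: eq_bigr => r _.
by rewrite horner_mxZ rmorphXn /= horner_mx_X pq_formZ pq_form_bfun.
Qed.

Lemma br_x_lagrange_den k j : br (x k) (lagrange_den x j) = 0.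
Proof.
rewrite /lagrange_den (der_prod_eq0 (derivation_brr _)) // => l _.
by rewrite (derB (derivation_brr _)) !br_x_x subrr.
Qed.

Lemma br_lagrange_den i j : br (lagrange_den x i) (lagrange_den x j) = 0.
Proof.
rewrite {1}/lagrange_den (der_prod_eq0 (derivation_brl _)) // => l _.
by rewrite (derB (derivation_brl _)) !br_x_lagrange_den subrr.
Qed.

Lemma br_x_y i j : br (x i) (yfun E Q P x j) = (i == j)%:R * yfun E Q P x j.
Proof.
by rewrite !yfun_lagrange brMr br_x_lagrange_den br_x_z mul0r add0r mulrCA.
Qed.

Definition lagrange_den_omit i j : S :=
  \prod_(k | (k != i) && (k != j)) (x i - x k).

Lemma lagrange_den_split i j : i != j ->
  lagrange_den x i = (x i - x j) * lagrange_den_omit i j.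
Proof. by move=> ij; rewrite /lagrange_den (bigD1 j) 1?eq_sym. Qed.

Lemma br_lagrange_den_z i j : i != j ->
  br (lagrange_den x i) (zfun j) = - (zfun j * lagrange_den_omit i j).
Proof.
move=> ij; have omit_z : br (lagrange_den_omit i j) (zfun j) = 0.
  rewrite (der_prod_eq0 (derivation_brl _)) // => k /andP[ki kj].
  rewrite (derB (derivation_brl _)) !br_x_z (negbTE ij) (negbTE kj).
  by rewrite mul0r subrr.
rewrite (lagrange_den_split ij) brMl omit_z mulr0 addr0.
rewrite (derB (derivation_brl _)) !br_x_z eqxx (negbTE ij).
by rewrite mul0r sub0r mul1r mulNr.
Qed.

Lemma br_y_y i j : br (yfun E Q P x i) (yfun E Q P x j) = 0.
Proof.
have [<-|ij] := eqVneq i j; first exact: br_self.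
have ji : j != i by rewrite eq_sym.
have scaled_br_z_z : (x i - x j) * br (zfun i) (zfun j) = zfun i * zfun j *+ 2.
  by rewrite br_z_z // -mulrnAr mulrA mulrV ?mul1r // x_sep.
rewrite !yfun_lagrange brMl !brMr br_lagrange_den br_lagrange_den_z //.
rewrite [br (zfun i) _]br_anti br_lagrange_den_z // (lagrange_den_split ij).
rewrite (lagrange_den_split ji) -[x j - x i]opprB.
have -> : - (x i - x j) * lagrange_den_omit j i * br (zfun i) (zfun j) =
          - (lagrange_den_omit j i * ((x i - x j) * br (zfun i) (zfun j))).
  by ring.
by rewrite scaled_br_z_z; ring.
Qed.

End Generators.

End PoissonBracket.

Unset Implicit Arguments.

Theorem proposition3p7 (R : realType) (d : nat) (S : comUnitAlgType (Cplx R))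
  (br : S -> S -> S) (E : 'I_d -> 'I_d -> S) (Q P : 'I_d -> S)
  (x : 'I_d -> S) :
  poisson_bracket br ->
  (forall i j k l : 'I_d,
      br (E i j) (E k l) = (j == k)%:R * E i l - (l == i)%:R * E k j) ->
  (forall i j k : 'I_d, br (E i j) (Q k) = (j == k)%:R * Q i) ->
  (forall i j k : 'I_d, br (E i j) (P k) = 0) ->
  (forall k l : 'I_d, br (Q k) (Q l) = 0) ->
  (forall k l : 'I_d, br (P k) (P l) = 0) ->
  (forall k l : 'I_d, br (Q k) (P l) = 0) ->
  char_poly (Amat E) = \prod_(i < d) ('X - (x i)%:P) ->
  (forall i j : 'I_d, i != j -> (x i - x j) \is a GRing.unit) ->
  forall i j : 'I_d,
    [/\ br (x i) (x j) = 0,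
        br (yfun E Q P x i) (yfun E Q P x j) = 0
      & br (x i) (yfun E Q P x j) = (i == j)%:R * yfun E Q P x j].
Proof.
case: d E Q P x => [|n] E Q P x br_poisson br_ee br_eq br_ep br_qq br_pp br_qp
  A_char x_sep i j; first by case: i.
split.
- exact: (br_x_x (K := Cplx R) br_poisson br_ee A_char x_sep).
- exact: (br_y_y (K := Cplx R) br_poisson br_ee br_eq br_ep br_qq br_pp br_qp
    A_char x_sep).
- exact: (br_x_y (K := Cplx R) br_poisson br_ee br_eq br_ep A_char x_sep).
Qed.
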